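(* Let $\mathtt Q$ be a probability measure and $(M_t)_{t\in\mathbb N_0}$ a nonnegative $\mathtt Q$-martingale with $M_0>0$. Let $F$ be the distribution function under $\mathtt Q$ of $\inf_{t\in\mathbb N_0}1/M_t$. If $F$ is atomless (continuous), then $\mathfrak p_t:=F(\inf_{s\le t}1/M_s)$, $t\in\mathbb N_0$, is a $\mathtt Q$-admissible anytime-valid $p$-value for $\{\mathtt Q\}$.
   Context: Setup: observations $(X_t)_{t\in\mathbb N}$, an independent $[0,1]$-uniform $U$, filtration $\mathcal F_0=\sigma(U)$, $\mathcal F_t=\sigma(U,X_1,\dots,X_t)$, $\mathcal F_\infty=\sigma(\bigcup_t\mathcal F_t)$; stopping times may be infinite. An anytime-valid $p$-value for $\{\mathtt Q\}$ is an adapted $[0,1]$-valued $(\mathfrak p_t)_{t\in\mathbb N_0}$ with $\mathtt Q(\mathfrak p_\tau\le\alpha)\le\alpha$ for all stopping times $\tau$ and $\alpha\in[0,1]$, where $\mathfrak p_\infty:=\liminf_t\mathfrak p_t$. It is $\mathtt Q$-admissible if there is no other such $p$-value $(\mathfrak p'_t)$ with $\mathtt Q(\mathfrak p'_t\le\mathfrak p_t)=1$ for all $t$ and $\mathtt Q(\mathfrak p'_t<\mathfrak p_t)>0$ for some $t$. *)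

From HB Require Import structures.
From mathcomp Require Import all_boot all_order all_algebra.
From mathcomp Require Import all_classical all_reals all_analysis.
Set Implicit Arguments. Unset Strict Implicit. Unset Printing Implicit Defensive.
Import Order.TTheory GRing.Theory Num.Theory.
Import numFieldNormedType.Exports.
Local Open Scope classical_set_scope.
Local Open Scope ring_scope.

Section Defs.
Context {d dT : measure_display} {Omega : measurableType d} {T : measurableType dT}
  {R : realType}.

Definition gen_sigma (G : set (set Omega)) : set (set Omega) :=
  smallest (sigma_algebra setT) G.

Definition filt (U : Omega -> R) (X : nat -> Omega -> T) (t : nat) : set (set Omega) :=
  gen_sigma [set A | (exists B : set R, measurable B /\ A = U @^-1` B) \/
                     (exists (i : nat) (B : set T),
                        (1 <= i <= t)%N /\ measurable B /\ A = X i @^-1` B)].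

Definition sigmaX (X : nat -> Omega -> T) : set (set Omega) :=
  gen_sigma [set A | exists (i : nat) (B : set T),
                        (1 <= i)%N /\ measurable B /\ A = X i @^-1` B].

Definition measurable_wrt (G : set (set Omega)) (f : Omega -> R) : Prop :=
  forall B : set R, measurable B -> G (f @^-1` B).

Definition uniform01 (Q : probability Omega R) (U : Omega -> R) : Prop :=
  forall x : R, 0 <= x <= 1 -> Q [set w | U w <= x] = x%:E.

Definition indep_U_X (Q : probability Omega R) (U : Omega -> R)
  (X : nat -> Omega -> T) : Prop :=
  forall (A : set R) (E : set Omega), measurable A -> sigmaX X E ->
    Q (U @^-1` A `&` E) = (Q (U @^-1` A) * Q E)%E.

(** stopping time, possibly infinite (None = +oo) *)
Definition stopping_time (F : nat -> set (set Omega)) (tau : Omega -> option nat) : Prop :=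
  forall t : nat, F t [set w | exists s : nat, tau w = Some s /\ (s <= t)%N].

Definition stopped (p : nat -> Omega -> R) (tau : Omega -> option nat) (w : Omega) : R :=
  match tau w with
  | Some t => p t w
  | None => limn_inf (fun t => p t w)
  end.

Definition anytime_valid (Q : probability Omega R) (F : nat -> set (set Omega))
  (p : nat -> Omega -> R) : Prop :=
  (forall t, measurable_wrt (F t) (p t)) /\
  (forall t w, 0 <= p t w <= 1) /\
  (forall tau, stopping_time F tau ->
     forall alpha : R, 0 <= alpha <= 1 ->
       (Q [set w | (stopped p tau w <= alpha)%R] <= alpha%:E)%E).

Definition admissible (Q : probability Omega R) (F : nat -> set (set Omega))
  (p : nat -> Omega -> R) : Prop :=
  ~ exists p' : nat -> Omega -> R,
      anytime_valid Q F p' /\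
      (forall t, Q [set w | p' t w <= p t w] = 1%E) /\
      (exists t, (0 < Q [set w | (p' t w < p t w)%R])%E).

Definition martingale (Q : probability Omega R) (F : nat -> set (set Omega))
  (M : nat -> Omega -> R) : Prop :=
  forall t : nat,
    measurable_wrt (F t) (M t) /\
    Q.-integrable setT (fun w => (M t w)%:E) /\
    (forall A, F t A ->
       (\int[Q]_(w in A) (M t.+1 w)%:E = \int[Q]_(w in A) (M t w)%:E)%E).

Definition inv_e (x : R) : \bar R := if x == 0 then +oo%E else (x^-1)%:E.

Definition inf_inv (M : nat -> Omega -> R) (w : Omega) : \bar R :=
  ereal_inf (range (fun t => inv_e (M t w))).

Definition inf_inv_upto (M : nat -> Omega -> R) (t : nat) (w : Omega) : \bar R :=
  ereal_inf [set inv_e (M s w) | s in [set s : nat | (s <= t)%N]].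

Definition cdf_inf_inv (Q : probability Omega R) (M : nat -> Omega -> R) (x : R) : R :=
  fine (Q [set w | (inf_inv M w <= x%:E)%E]).

(** p_t := F(inf_{s<=t} 1/M_s) (finite since M_0 > 0) *)
Definition pval (Q : probability Omega R) (M : nat -> Omega -> R) (t : nat) (w : Omega) : R :=
  cdf_inf_inv Q M (fine (inf_inv_upto M t w)).

End Defs.

From HB Require Import structures.
From mathcomp Require Import all_boot all_order all_algebra.
From mathcomp Require Import all_classical all_reals all_analysis.
From mathcomp Require Import measurable_realfun.
From mathcomp Require Import lra.
Import Order.TTheory GRing.Theory Num.Theory.
Import numFieldNormedType.Exports.
Local Open Scope classical_set_scope.
Local Open Scope ring_scope.

(** Write G_t := inf_{s<=t} 1/M_s and Y := inf_t 1/M_t; both are finite reals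
   because M_0 > 0, and F is the (continuous) distribution function of Y.

   G_t decreases to Y, hence p_t >= F(Y) and, F being continuous,
   p_oo = liminf_t p_t = F(Y).  So p_tau >= F(Y) for every stopping time tau,
   and F(Y) is super-uniform: for a < 1 the largest c with F c = a satisfies
   {F(Y) <= a} ⊆ {Y <= c}, an event of probability a.

   Let p' be anytime valid with p' <= p a.s. and
   Q(p'_t0 < p_t0) > 0.  There is a level a and, through the point c with
   F c = a and a margin del > 0, an event A ∈ F_t0 of positive probability on
   which p'_t0 <= a and G_t0 > c + del.  Stopping at t0 on A and never
   elsewhere, validity of p' yields Q(A ∪ {Y <= c}) <= a = Q(Y <= c), so
   almost all of A lies in {Y <= c}.  There M exceeds b = 1/(c + del/2) after
   t0 while M_t0 <= 1/(c + del) on A, and Doob's maximal inequality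
   b Q(A ∩ {sup_{s>=t0} M_s > b}) <= E[M_t0; A] forces Q(A) = 0. *)

Section LevelSets.
Context {d : measure_display} {T : measurableType d} {R : realType}.
Implicit Types f : T -> R.

Lemma measurable_le_set f x : measurable_fun setT f -> measurable [set w | f w <= x].
Proof.
move=> mf; rewrite (_ : [set w | f w <= x] = f @^-1` `]-oo, x]).
  by have := mf measurableT _ (@measurable_itv _ `]-oo, x]); rewrite setTI.
by apply/seteqP; split => w /=; rewrite in_itv.
Qed.

Lemma measurable_lt_set f x : measurable_fun setT f -> measurable [set w | f w < x].
Proof.
move=> mf; rewrite (_ : [set w | f w < x] = f @^-1` `]-oo, x[).
  by have := mf measurableT _ (@measurable_itv _ `]-oo, x[); rewrite setTI.
by apply/seteqP; split => w /=; rewrite in_itv.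
Qed.

Lemma measurable_gt_set f x : measurable_fun setT f -> measurable [set w | x < f w].
Proof.
move=> mf; rewrite (_ : [set w | x < f w] = f @^-1` `]x, +oo[).
  by have := mf measurableT _ (@measurable_itv _ `]x, +oo[); rewrite setTI.
by apply/seteqP; split => w /=; rewrite in_itv /= andbT.
Qed.

(** Strict sublevel sets generate the Borel sets of R. *)
Lemma measurable_from_lt_sets f :
  (forall x, measurable [set w | f w < x]) -> measurable_fun setT f.
Proof.
move=> h; apply: (measurability _ (RGenInftyO.measurableE R)) => //.
move=> _ [_ [x ->] <-]; rewrite setTI.
suff -> : f @^-1` `]-oo, x[ = [set w | f w < x] by [].
by apply/seteqP; split => w /=; rewrite in_itv.
Qed.

Lemma measurable_inv_lt_set f x :
  measurable_fun setT f -> measurable [set w | 0 < x /\ x^-1 < f w].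
Proof.
move=> mf; have [x0|x0] := pselect (0 < x).
  rewrite (_ : [set w | _] = [set w | x^-1 < f w]); first exact: measurable_gt_set.
  by apply/seteqP; split => w /= => [[]|]//.
rewrite (_ : [set w | _] = set0) //.
by apply/seteqP; split => w //= -[].
Qed.

End LevelSets.

Section Elementary.
Context {R : realType}.

Lemma inv_lt_iff (y x : R) : 0 <= y -> (y != 0 /\ y^-1 < x) <-> (0 < x /\ x^-1 < y).
Proof.
move=> y0; split.
  move=> [yn0 h]; have yp : 0 < y by rewrite lt0r yn0.
  have xp : 0 < x by apply: le_lt_trans h; rewrite invr_ge0.
  by split => //; rewrite invf_plt ?posrE.
move=> [xp h]; have yp : 0 < y by apply: lt_trans h; rewrite invr_gt0.
by split; [rewrite gt_eqF|rewrite invf_plt ?posrE].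
Qed.

Lemma exists_inv_nat_lt (e : R) : 0 < e -> exists n : nat, n.+1%:R^-1 < e.
Proof.
move=> e0; exists (Num.Def.archi_bound e^-1).
rewrite invf_plt ?posrE ?ltr0Sn //.
apply: (lt_le_trans (archi_boundP _)); first by rewrite invr_ge0 ltW.
by rewrite ler_nat.
Qed.

Lemma continuous_ball {f : R -> R} (x : R) {e : R} : continuous f -> 0 < e ->
  exists2 del, 0 < del & forall y, `|x - y| < del -> `|f x - f y| < e.
Proof.
move=> cf e0; have /cvgrPdist_lt /(_ e e0) := cf x.
by move=> /nbhs_ballP [del del0 h]; exists del => // y xy; apply: h.
Qed.

Lemma liminf_le_lim (u v : nat -> R) (l : R) : (forall t, 0 <= u t <= 1) ->
  v @ \oo --> l -> (forall t, u t <= v t) -> limn_inf u <= l.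
Proof.
move=> u01 cv uv.
have lb : has_lbound (range u) by exists 0 => _ [t _ <-]; have /andP[] := u01 t.
have ci : cvgn (infs u).
  apply: nondecreasing_is_cvgn; first exact: nondecreasing_infs.
  exists 1 => _ [n _ <-]; apply: (@le_trans _ _ (u n)).
    by apply: ge_inf; [exact: has_lbound_sdrop|exists n => /=].
  by have /andP[] := u01 n.
rewrite /limn_inf; apply: limr_le => //; apply: nearW => n.
rewrite -(cvg_lim _ cv) //; apply: limr_ge; first by apply/cvg_ex; exists l.
exists n => // m /= nm; apply: le_trans (uv m).
by apply: ge_inf; [exact: has_lbound_sdrop|exists m].
Qed.

End Elementary.

Section PositiveMass.
Context {d : measure_display} {T : measurableType d} {R : realType}.
Context (mu : {measure set T -> \bar R}).

Lemma positive_measure_nonempty {A : set T} : (0 < mu A)%E -> exists w, A w.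
Proof.
move=> Apos; apply: contrapT => /forallNP hA.
by move: Apos; rewrite (_ : A = set0) ?measure0 ?ltxx //; apply/seteqP; split.
Qed.

Lemma positive_bigcup {F : nat -> set T} : (forall n, measurable (F n)) ->
  (0 < mu (\bigcup_n F n))%E -> exists n, (0 < mu (F n))%E.
Proof.
move=> mF h; apply: contrapT => /forallNP hn.
have F0 n : mu (F n) = 0%E.
  by apply/eqP; rewrite eq_le measure_ge0 andbT leNgt; apply/negP; exact: hn.
have [N [mN N0 sub]] : mu.-negligible (\bigcup_n F n).
  by apply: negligible_bigcup => n; exists (F n); split => //; exact: F0.
have := le_measure mu (mem_set (bigcupT_measurable _ mF)) (mem_set mN) sub.
move=> /(lt_le_trans h) hN.
by move: (eq_ind _ (fun z => (0 < z)%E) hN _ N0); rewrite ltxx.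
Qed.

Lemma level_with_positive_mass {f g : T -> R} :
  measurable_fun setT f -> measurable_fun setT g ->
  (forall w, 0 <= f w) -> (forall w, g w <= 1) ->
  (0 < mu [set w | (f w < g w)%R])%E ->
  exists a, 0 <= a < 1 /\
    (0 < mu ([set w | (f w <= a)%R] `&` [set w | (a < g w)%R]))%E.
Proof.
move=> mf mg f0 g1 hpos.
pose B n k := [set w | f w <= k%:R / n.+1%:R] `&` [set w | k%:R / n.+1%:R < g w].
have mB n k : measurable (B n k).
  by apply: measurableI; [exact: measurable_le_set|exact: measurable_gt_set].
have sub : [set w | f w < g w] `<=` \bigcup_n \bigcup_k B n k.
  move=> w /= fg.
  have [n hn] := @exists_inv_nat_lt _ (g w - f w) (ltac:(by rewrite subr_gt0)).
  have N0 : 0 < n.+1%:R :> R by rewrite ltr0Sn.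
  have /andP[t1 t2] := truncn_itv (mulr_ge0 (f0 w) (ltW N0)).
  have h1 : 1 < (g w - f w) * n.+1%:R by rewrite -ltr_pdivrMr // div1r.
  exists n => //; exists (Num.truncn (f w * n.+1%:R)).+1 => //; split => /=.
    by rewrite ler_pdivlMr //; apply: ltW.
  rewrite ltr_pdivrMr // mulrBl in h1 *; rewrite -addn1 natrD in t1 t2 *; lra.
have mlt : measurable [set w | f w < g w].
  rewrite (_ : [set w | _] = [set w | (f \- g) w < 0]).
    by apply: measurable_lt_set; exact: measurable_funB.
  by apply/seteqP; split => w /=; rewrite subr_lt0.
have mBk n : measurable (\bigcup_k B n k) by exact: bigcupT_measurable.
have := le_measure mu (mem_set mlt) (mem_set (bigcupT_measurable _ mBk)) sub.
move=> /(lt_le_trans hpos) /(positive_bigcup mBk) [n] /(positive_bigcup (mB n)) [k Bpos].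
exists (k%:R / n.+1%:R); split => //.
have [w [_ /= ag]] := positive_measure_nonempty Bpos.
by rewrite divr_ge0 //=; exact: lt_le_trans ag (g1 w).
Qed.

Lemma positive_margin {B : set T} {h : T -> R} {c : R} :
  measurable B -> measurable_fun setT h -> (0 < mu B)%E ->
  (forall w, B w -> c < h w) ->
  exists2 del, 0 < del & (0 < mu (B `&` [set w | (c + del < h w)%R]))%E.
Proof.
move=> mB mh Bpos ch.
pose Am m := B `&` [set w | c + m.+1%:R^-1 < h w].
have mAm m : measurable (Am m) by apply: measurableI => //; exact: measurable_gt_set.
have [m Apos] : exists m, (0 < mu (Am m))%E.
  apply: (positive_bigcup mAm); apply: (lt_le_trans Bpos).
  apply: le_measure; rewrite ?inE //; first exact: bigcupT_measurable.
  move=> w Bw.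
  have [m hm] := @exists_inv_nat_lt _ (h w - c) (ltac:(by rewrite subr_gt0 ch)).
  by exists m => //; split => //=; move: hm; set x := m.+1%:R^-1; lra.
by exists m.+1%:R^-1 => //; rewrite invr_gt0 ltr0Sn.
Qed.

Lemma measure_le_up_to_null {E S N : set T} :
  measurable E -> measurable S -> measurable N -> mu N = 0%E ->
  E `<=` S `|` N -> (mu E <= mu S)%E.
Proof.
move=> mE mS mN N0 ESN.
have ESN' : (mu E <= mu (S `|` N))%E.
  by apply: le_measure; rewrite ?inE //; exact: measurableU.
apply: le_trans ESN' _; apply: le_trans (measureU2 mu mS mN) _.
by rewrite [X in (_ + X)%E](_ : _ = 0%E) ?adde0.
Qed.

Lemma measure_diff_null {A S : set T} : measurable A -> measurable S ->
  mu S \is a fin_num -> (mu (A `|` S) <= mu S)%E -> mu (A `\` S) = 0%E.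
Proof.
move=> mA mS Sfin; rewrite (_ : A `|` S = S `|` (A `\` S)); last first.
  apply/seteqP; split => w /=; last by case=> [|[]]; [right|left].
  by case=> [Aw|]; [have [|] := pselect (S w); [left|right]|left].
rewrite measureU //; last 2 first.
- exact: measurableD.
- by apply/seteqP; split => // w [? []].
rewrite -[X in (_ <= X)%E]adde0 leeD2lE // => ASle.
by apply/eqP; rewrite eq_le ASle measure_ge0.
Qed.

End PositiveMass.

(** The running infimum G_t = inf_{s<=t} 1/M_s and its limit Y = inf_t 1/M_t,
    as real numbers. *)
Section RunningInfimum.
Context {d : measure_display} {Omega : measurableType d} {R : realType}.

Definition total_inf (M : nat -> Omega -> R) (w : Omega) : R := fine (inf_inv M w).

Definition running_inf (M : nat -> Omega -> R) (t : nat) (w : Omega) : R :=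
  fine (inf_inv_upto M t w).

Context {M : nat -> Omega -> R}.
Hypothesis Hnonneg : forall t w, 0 <= M t w.
Hypothesis HM0 : forall w, 0 < M 0%N w.

Lemma inv_e_ge0 (x : R) : 0 <= x -> (0 <= inv_e x)%E.
Proof. by rewrite /inv_e; case: eqP => // _ x0; rewrite lee_fin invr_ge0. Qed.

Lemma inv_e_lt (x y : R) : (inv_e x < y%:E)%E <-> x != 0 /\ x^-1 < y.
Proof.
by rewrite /inv_e; case: eqP => /= [->|/eqP x0]; rewrite ?lte_fin; split => // -[].
Qed.

Lemma inv_e_M0 w : inv_e (M 0%N w) = ((M 0%N w)^-1)%:E.
Proof. by rewrite /inv_e gt_eqF. Qed.

Lemma inf_inv_over_fin (S : set nat) w : S 0%N ->
  ereal_inf [set inv_e (M s w) | s in S] \is a fin_num.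
Proof.
move=> S0; rewrite ge0_fin_numE; last first.
  by apply: le_ereal_inf_tmp => _ [s _ <-]; exact: inv_e_ge0.
apply: le_lt_trans (ltry ((M 0%N w)^-1)).
by rewrite -inv_e_M0; apply: ereal_inf_lbound; exists 0%N.
Qed.

Lemma inf_inv_fin w : inf_inv M w \is a fin_num.
Proof. exact: inf_inv_over_fin. Qed.

Lemma inf_inv_upto_fin t w : inf_inv_upto M t w \is a fin_num.
Proof. exact: inf_inv_over_fin. Qed.

Lemma total_inf_ge0 w : 0 <= total_inf M w.
Proof.
by rewrite fine_ge0 //; apply: le_ereal_inf_tmp => _ [s _ <-]; exact: inv_e_ge0.
Qed.

Lemma total_inf_ltP w x : total_inf M w < x <-> exists s, M s w != 0 /\ (M s w)^-1 < x.
Proof.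
rewrite -lte_fin fineK ?inf_inv_fin//; split.
  by move=> /ereal_inf_ltP[_ [s _ <-]] /inv_e_lt; exists s.
by move=> [s /inv_e_lt h]; apply/ereal_inf_ltP; exists (inv_e (M s w)) => //; exists s.
Qed.

Lemma running_inf_ltP t w x : running_inf M t w < x <->
  exists s, (s <= t)%N /\ M s w != 0 /\ (M s w)^-1 < x.
Proof.
rewrite -lte_fin fineK ?inf_inv_upto_fin//; split.
  by move=> /ereal_inf_ltP[_ [s st <-]] /inv_e_lt; exists s.
move=> [s [st /inv_e_lt h]]; apply/ereal_inf_ltP; exists (inv_e (M s w)) => //.
by exists s.
Qed.

Lemma total_inf_le_running t w : total_inf M w <= running_inf M t w.
Proof.
rewrite fine_le ?inf_inv_fin ?inf_inv_upto_fin//.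
by apply: ereal_inf_le_tmp => _ [s _ <-]; exists s.
Qed.

Lemma running_inf_cvg w : running_inf M ^~ w @ \oo --> total_inf M w.
Proof.
apply/cvgrPdist_lt => e e0.
have [s [Ms hs]] : exists s, M s w != 0 /\ (M s w)^-1 < total_inf M w + e.
  by apply/total_inf_ltP; rewrite ltrDl.
exists s => // t /= st.
rewrite ler0_norm ?subr_le0 ?total_inf_le_running// opprB ltrBlDl.
by apply/running_inf_ltP; exists s.
Qed.

Lemma M_le_of_running_inf {t x w} : 0 < x -> x < running_inf M t w -> M t w <= x^-1.
Proof.
move=> x0 xG; rewrite leNgt; apply/negP => Mx.
have : running_inf M t w < x.
  apply/running_inf_ltP; exists t; split => //.
  by apply/(inv_lt_iff _ _ (Hnonneg t w)); split.
by rewrite ltNge (ltW xG).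
Qed.

Lemma exceeds_after {t c del w} : 0 < del ->
  c + del < running_inf M t w -> total_inf M w <= c ->
  exists2 s, (t <= s)%N & (c + del / 2)^-1 < M s w.
Proof.
move=> del0 hG Yc.
have [s [Ms hs]] : exists s, M s w != 0 /\ (M s w)^-1 < c + del / 2.
  by apply/total_inf_ltP; lra.
exists s; last by have [] := (inv_lt_iff _ _ (Hnonneg s w)).1 (conj Ms hs).
rewrite leqNgt; apply/negP => st.
have : running_inf M t w < c + del / 2.
  by apply/running_inf_ltP; exists s; split => //; exact: ltnW.
lra.
Qed.

Lemma total_inf_measurable : (forall s, measurable_fun setT (M s)) ->
  measurable_fun setT (total_inf M).
Proof.
move=> mM; apply: measurable_from_lt_sets => x.
rewrite (_ : [set w | _ < x] = \bigcup_s [set w | 0 < x /\ x^-1 < M s w]).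
  by apply: bigcupT_measurable => s; exact: measurable_inv_lt_set.
apply/seteqP; split => w /=.
  by move/total_inf_ltP => [s /(inv_lt_iff _ _ (Hnonneg s w)) h]; exists s.
move=> [s _ /(inv_lt_iff _ _ (Hnonneg s w)) h]; apply/total_inf_ltP; exists s.
exact: h.
Qed.

End RunningInfimum.

Section Filtration.
Context {d dT : measure_display} {Omega : measurableType d} {T : measurableType dT}
  {R : realType}.

Definition filt_gens (X : nat -> Omega -> T) (U : Omega -> R) (t : nat) :
    set (set Omega) :=
  [set A | (exists B : set R, measurable B /\ A = U @^-1` B) \/
           (exists (i : nat) (B : set T),
              (1 <= i <= t)%N /\ measurable B /\ A = X i @^-1` B)].

Context {X : nat -> Omega -> T} {U : Omega -> R}.
Hypothesis HX : forall t, measurable_fun setT (X t).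
Hypothesis HU : measurable_fun setT U.

Lemma filtE t : filt U X t = @measurable _ (g_sigma_algebraType (filt_gens X U t)).
Proof. by []. Qed.

Lemma filt_meas {t A} : filt U X t A -> measurable A.
Proof.
apply: smallest_sub; first exact: sigma_algebra_measurable.
move=> _ [[B [mB ->]]|[i [B [_ [mB ->]]]]].
  by rewrite -(setTI (U @^-1` B)); exact: HU.
by rewrite -(setTI (X i @^-1` B)); exact: HX.
Qed.

Lemma filt_mono t t' : (t <= t')%N -> filt U X t `<=` filt U X t'.
Proof.
move=> tt'; apply: sub_smallest2r; first exact: smallest_sigma_algebra.
move=> _ [[B [mB ->]]|[i [B [/andP[i1 it] [mB ->]]]]]; first by left; exists B.
by right; exists i, B; split => //; rewrite i1 /= (leq_trans it).
Qed.

Lemma filtI t (A B : set Omega) : filt U X t A -> filt U X t B -> filt U X t (A `&` B).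
Proof. by rewrite !filtE; exact: measurableI. Qed.

Lemma filtU t (A B : set Omega) : filt U X t A -> filt U X t B -> filt U X t (A `|` B).
Proof. by rewrite !filtE; exact: measurableU. Qed.

Lemma filtD t (A B : set Omega) : filt U X t A -> filt U X t B -> filt U X t (A `\` B).
Proof. by rewrite !filtE; exact: measurableD. Qed.

Lemma wrtE t (f : Omega -> R) :
  measurable_wrt (filt U X t) f <->
  measurable_fun (setT : set (g_sigma_algebraType (filt_gens X U t))) f.
Proof.
split => h; first by move=> _ B mB; rewrite setTI; exact: h.
by move=> B mB; have := h measurableT B mB; rewrite setTI.
Qed.

Lemma wrt_mono s t (f : Omega -> R) : (s <= t)%N -> measurable_wrt (filt U X s) f ->
  measurable_wrt (filt U X t) f.
Proof. by move=> st h B mB; apply: filt_mono st _ (h B mB). Qed.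

Lemma wrt_meas {t} {f : Omega -> R} :
  measurable_wrt (filt U X t) f -> measurable_fun setT f.
Proof. by move=> h _ B mB; rewrite setTI; apply: filt_meas; exact: h. Qed.

Lemma wrt_le_set {t} {f : Omega -> R} x : measurable_wrt (filt U X t) f ->
  filt U X t [set w | f w <= x].
Proof.
move=> h; have := h _ (@measurable_itv _ `]-oo, x]).
suff -> : f @^-1` `]-oo, x] = [set w | f w <= x] by [].
by apply/seteqP; split => w /=; rewrite in_itv.
Qed.

Lemma wrt_gt_set {t} {f : Omega -> R} x : measurable_wrt (filt U X t) f ->
  filt U X t [set w | x < f w].
Proof.
move=> h; have := h _ (@measurable_itv _ `]x, +oo[).
suff -> : f @^-1` `]x, +oo[ = [set w | x < f w] by [].
by apply/seteqP; split => w /=; rewrite in_itv /= andbT.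
Qed.

Lemma running_inf_wrt {M : nat -> Omega -> R} : (forall t w, 0 <= M t w) ->
  (forall w, 0 < M 0%N w) -> (forall s, measurable_wrt (filt U X s) (M s)) ->
  forall t, measurable_wrt (filt U X t) (running_inf M t).
Proof.
move=> M0 HM0 HMw t; apply/wrtE; apply: measurable_from_lt_sets => x.
rewrite (_ : [set w | _ < x] = \bigcup_(s in [set s | (s <= t)%N])
    [set w | 0 < x /\ x^-1 < M s w]).
  apply: bigcup_measurable => s st; apply: measurable_inv_lt_set.
  by apply/wrtE; exact: wrt_mono st (HMw s).
apply/seteqP; split => w /=.
  by move/(running_inf_ltP M0 HM0) => [s [st /(inv_lt_iff _ _ (M0 s w)) h]]; exists s.
move=> [s st /(inv_lt_iff _ _ (M0 s w)) h]; apply/(running_inf_ltP M0 HM0).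
by exists s.
Qed.

Lemma stopping_time_some tau s : stopping_time (filt U X) tau ->
  measurable [set w | tau w = Some s].
Proof.
move=> st.
have mT k : measurable [set w | exists s', tau w = Some s' /\ (s' <= k)%N].
  exact: filt_meas (st k).
case: s => [|s].
  rewrite (_ : [set w | _] = [set w | exists s', tau w = Some s' /\ (s' <= 0)%N]) //.
  apply/seteqP; split => w /=; first by move=> ->; exists 0%N.
  by move=> [s' [-> ]]; rewrite leqn0 => /eqP ->.
rewrite (_ : [set w | _] = [set w | exists s', tau w = Some s' /\ (s' <= s.+1)%N]
   `\` [set w | exists s', tau w = Some s' /\ (s' <= s)%N]).
  exact: measurableD.
apply/seteqP; split => w /=.
  move=> ->; split; first by exists s.+1.
  by move=> [s' [[<-]]]; rewrite ltnn.
move=> [[s' [-> s's]] h]; congr Some; apply/eqP; rewrite eqn_leq s's /=.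
by rewrite ltnNge; apply/negP => s's'; apply: h; exists s'.
Qed.

Lemma stopping_time_none tau : stopping_time (filt U X) tau ->
  measurable [set w | tau w = None].
Proof.
move=> st; rewrite (_ : [set w | _] = ~` \bigcup_s [set w | tau w = Some s]).
  by apply: measurableC; apply: bigcupT_measurable => s; exact: stopping_time_some.
apply/seteqP; split => w /=; first by move=> h [s _ /=]; rewrite h.
by case E: (tau w) => [s|] // h; exfalso; apply: h; exists s.
Qed.

Lemma stopped_le_measurable (p : nat -> Omega -> R) tau (alpha : R) :
  stopping_time (filt U X) tau -> (forall t, measurable_fun setT (p t)) ->
  measurable_fun setT (fun w => limn_inf (p ^~ w)) ->
  measurable [set w | stopped p tau w <= alpha].
Proof.
move=> st mp ml.
rewrite (_ : [set w | _] =
  (\bigcup_s ([set w | tau w = Some s] `&` [set w | p s w <= alpha])) `|`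
  ([set w | tau w = None] `&` [set w | limn_inf (p ^~ w) <= alpha])).
  apply: measurableU.
    apply: bigcupT_measurable => s; apply: measurableI.
      exact: stopping_time_some.
    exact: measurable_le_set.
  by apply: measurableI; [exact: stopping_time_none|exact: measurable_le_set].
apply/seteqP; split => w /=; rewrite /stopped.
  by case E : (tau w) => [s|] h; [left; exists s|right].
by move=> [[s _ /= [-> h]]|[-> h]].
Qed.

Definition stop_on (A : set Omega) (t0 : nat) (w : Omega) : option nat :=
  if pselect (A w) then Some t0 else None.

Lemma stop_on_stopping_time {A t0} :
  filt U X t0 A -> stopping_time (filt U X) (stop_on A t0).
Proof.
move=> hA s; have [ts|ts] := leqP t0 s.
  rewrite (_ : [set w | _] = A); first exact: filt_mono ts _ hA.
  apply/seteqP; split => w /=; rewrite /stop_on; case: pselect => // Aw.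
  - by move=> [s' []].
  - by move=> _; exists t0.
rewrite (_ : [set w | _] = set0); first by rewrite filtE; exact: measurable0.
apply/seteqP; split => w //=; rewrite /stop_on; case: pselect => Aw [s' [//]].
by move=> [<-]; rewrite leqNgt ts.
Qed.

End Filtration.

Section DistributionFunction.
Context {d : measure_display} {Omega : measurableType d} {R : realType}.
Context (Q : probability Omega R) {M : nat -> Omega -> R}.
Hypothesis Hnonneg : forall t w, 0 <= M t w.
Hypothesis HM0 : forall w, 0 < M 0%N w.
Hypothesis HMm : forall s, measurable_fun setT (M s).
Hypothesis Hcont : continuous (cdf_inf_inv Q M).

Local Notation Y := (total_inf M).
Local Notation F := (cdf_inf_inv Q M).

Let Ym : measurable_fun setT Y := total_inf_measurable Hnonneg HM0 HMm.

Lemma cdfE x : Q [set w | Y w <= x] = (F x)%:E.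
Proof.
rewrite /cdf_inf_inv (_ : [set w | _] = [set w | Y w <= x]); last first.
  by apply/seteqP; split => w /=; rewrite -lee_fin fineK // inf_inv_fin.
by rewrite fineK //; apply: fin_num_measure; exact: measurable_le_set.
Qed.

Lemma cdf_nondecreasing : {homo F : x y / x <= y}.
Proof.
move=> x y xy; rewrite -lee_fin -!cdfE; apply: le_measure; rewrite ?inE.
- exact: measurable_le_set.
- exact: measurable_le_set.
- by move=> w /= /le_trans; apply.
Qed.

Lemma cdf_ge0 x : 0 <= F x.
Proof. by rewrite -lee_fin -cdfE. Qed.

Lemma cdf_le1 x : F x <= 1.
Proof. by rewrite -lee_fin -cdfE; apply: probability_le1; exact: measurable_le_set. Qed.

Lemma cdf_neg x : x < 0 -> F x = 0.
Proof.
move=> x0; apply/eqP; rewrite -(@eqe _ _ 0) -cdfE.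
rewrite (_ : [set w | Y w <= x] = set0) ?measure0 //.
apply/seteqP; split => w //= Yx.
by have := total_inf_ge0 Hnonneg w; rewrite leNgt (le_lt_trans Yx x0).
Qed.

(** F tends to 1 at infinity (continuity from below of Q). *)
Lemma cdf_large a : a < 1 -> exists n : nat, a < F n%:R.
Proof.
move=> a1; apply: contrapT => /forallNP h.
have Fa n : F n%:R <= a by rewrite leNgt; apply/negP; exact: h.
pose A n := [set w | Y w <= n%:R].
have mA n : measurable (A n) by exact: measurable_le_set.
have nd : {homo A : n m / (n <= m)%N >-> (n <= m)%O}.
  by move=> n m nm; rewrite subsetEset => w /= /le_trans; apply; rewrite ler_nat.
have cv := nondecreasing_cvg_mu (mu := Q) mA (bigcupT_measurable A mA) nd.
have : (Q (\bigcup_n A n) <= a%:E)%E.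
  rewrite -(cvg_lim _ cv) //; apply: lime_le; first by apply/cvg_ex; eexists; exact: cv.
  by apply: nearW => n /=; rewrite /A cdfE lee_fin.
rewrite (_ : \bigcup_n A n = setT); last first.
  apply/seteqP; split => // w _; exists (Num.Def.archi_bound (Y w)) => //.
  by rewrite /A /= ltW // archi_boundP // total_inf_ge0.
by rewrite probability_setT lee_fin leNgt a1.
Qed.

(** For a ∈ [0, 1), c := sup {y | F y <= a} is the largest point with
    F c = a; it exists because F is continuous. *)
Lemma cut_point a : 0 <= a < 1 -> exists c,
  [/\ F c = a, forall y, F y <= a -> y <= c & 0 <= c].
Proof.
move=> /andP[a0 a1].
pose S := [set y | F y <= a].
have [n hn] := cdf_large _ a1.
have hasS : has_sup S.
  split; first by exists (-1); rewrite /S /= cdf_neg ?ltrN10.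
  exists n%:R => y /= Fy; rewrite leNgt; apply/negP => /ltW /cdf_nondecreasing.
  by move=> /(lt_le_trans hn); rewrite ltNge Fy.
have ub y : F y <= a -> y <= sup S by move=> Fy; exact: sup_upper_bound.
set c := sup S.
have Fc : F c = a.
  apply/eqP; rewrite eq_le; apply/andP; split; rewrite leNgt; apply/negP.
  - move=> ac; have gap : 0 < F c - a by rewrite subr_gt0.
    have [del del0 hd] := continuous_ball c Hcont gap.
    have [y Sy ly] := sup_adherent del0 hasS.
    have yc : y <= c := ub y Sy.
    have := hd y; rewrite ger0_norm ?subr_ge0 //.
    move=> /(_ ltac:(rewrite /c; lra)) h.
    have := ler_norm (F c - F y); rewrite /S /= in Sy; lra.
  - move=> ca; have gap : 0 < a - F c by rewrite subr_gt0.
    have [del del0 hd] := continuous_ball c Hcont gap.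
    have Sy : F (c + del / 2) <= a.
      have := hd (c + del / 2).
      rewrite opprD addrA subrr add0r normrN ger0_norm; last by lra.
      move=> /(_ ltac:(lra)) h; have := ler_norm (F (c + del / 2) - F c).
      rewrite distrC in h; lra.
    have := ub _ Sy; rewrite -/c; lra.
exists c; split => //.
rewrite leNgt; apply/negP => c0.
have := ub (c / 2); rewrite cdf_neg; last by lra.
move=> /(_ a0); rewrite -/c; lra.
Qed.

Lemma cdf_total_inf_measurable : measurable_fun setT (fun w => F (Y w)).
Proof.
apply: measurableT_comp; last exact: Ym.
exact: nondecreasing_measurable cdf_nondecreasing.
Qed.

Lemma cdf_super_uniform a : 0 <= a <= 1 -> (Q [set w | (F (Y w) <= a)%R] <= a%:E)%E.
Proof.
move=> /andP[a0]; rewrite le_eqVlt => /orP[/eqP ->|a1].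
  by apply: probability_le1; exact: measurable_le_set cdf_total_inf_measurable.
have [c [Fc ub c0]] := @cut_point a (ltac:(by rewrite a0 a1)).
apply: (@le_trans _ _ (Q [set w | Y w <= c])); last by rewrite cdfE Fc.
apply: le_measure; rewrite ?inE.
- exact: measurable_le_set cdf_total_inf_measurable.
- exact: measurable_le_set.
- by move=> w /= h; exact: (ub _ h).
Qed.

End DistributionFunction.

Lemma liminf_measurable {d : measure_display} {Omega : measurableType d} {R : realType}
  (p : nat -> Omega -> R) :
  (forall t, measurable_fun setT (p t)) -> (forall t w, 0 <= p t w <= 1) ->
  measurable_fun setT (fun w => limn_inf (p ^~ w)).
Proof.
move=> mp p01.
have lb w : has_lbound (range (p ^~ w)).
  by exists 0 => _ [t _ <-]; have /andP[] := p01 t w.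
apply: (measurable_fun_cvg (h := fun n w => infs (p ^~ w) n)).
  by move=> n; apply: measurable_fun_infs => // w _.
move=> w _; apply: nondecreasing_is_cvgn; first exact: nondecreasing_infs.
exists 1 => _ [n _ <-]; apply: (@le_trans _ _ (p n w)).
  by apply: ge_inf; [exact: has_lbound_sdrop|exists n => /=].
by have /andP[] := p01 n w.
Qed.

Section Validity.
Context {d dT : measure_display} {Omega : measurableType d} {T : measurableType dT}
  {R : realType} (Q : probability Omega R).
Context {X : nat -> Omega -> T} {U : Omega -> R} {M : nat -> Omega -> R}.
Hypothesis HX : forall t, measurable_fun setT (X t).
Hypothesis HU : measurable_fun setT U.
Hypothesis HMw : forall s, measurable_wrt (filt U X s) (M s).
Hypothesis Hnonneg : forall t w, 0 <= M t w.
Hypothesis HM0 : forall w, 0 < M 0%N w.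
Hypothesis Hcont : continuous (cdf_inf_inv Q M).

Local Notation Y := (total_inf M).
Local Notation F := (cdf_inf_inv Q M).
Local Notation p := (pval Q M).

Let HMm s : measurable_fun setT (M s) := wrt_meas HX HU (HMw s).

Lemma pvalE t w : p t w = F (running_inf M t w).
Proof. by []. Qed.

Lemma pval_wrt t : measurable_wrt (filt U X t) (p t).
Proof.
apply/wrtE; apply: measurableT_comp.
  exact: nondecreasing_measurable (cdf_nondecreasing Q Hnonneg HM0 HMm).
by apply/wrtE; exact: running_inf_wrt.
Qed.

Lemma pval_measurable t : measurable_fun setT (p t).
Proof. exact: (wrt_meas HX HU (pval_wrt t)). Qed.

Lemma pval01 t w : 0 <= p t w <= 1.
Proof. by rewrite pvalE (cdf_ge0 Q Hnonneg HM0 HMm) (cdf_le1 Q Hnonneg HM0 HMm). Qed.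

(** Continuity of F turns G_t --> Y into p_t --> F(Y). *)
Lemma pval_cvg w : p ^~ w @ \oo --> F (Y w).
Proof. exact: cvg_comp (running_inf_cvg Hnonneg HM0 w) (Hcont _). Qed.

Lemma pval_liminf w : limn_inf (p ^~ w) = F (Y w).
Proof. by apply: (cvg_limn_inf_sup _).1; exact: pval_cvg. Qed.

Lemma stopped_pval_ge tau w : F (Y w) <= stopped p tau w.
Proof.
rewrite /stopped; case: (tau w) => [t|]; last by rewrite pval_liminf.
by rewrite pvalE; apply: cdf_nondecreasing => //; exact: total_inf_le_running.
Qed.

Lemma pval_anytime_valid : anytime_valid Q (filt U X) p.
Proof.
split; first exact: pval_wrt.
split; first exact: pval01.
move=> tau st alpha a01.
apply: (le_trans _ (cdf_super_uniform Q Hnonneg HM0 HMm Hcont _ a01)).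
apply: le_measure; rewrite ?inE.
- apply: (stopped_le_measurable HX HU _ _ _ st pval_measurable).
  rewrite (_ : (fun w => _) = (fun w => F (Y w))); last exact/funext/pval_liminf.
  exact: cdf_total_inf_measurable.
- exact: measurable_le_set (cdf_total_inf_measurable Q Hnonneg HM0 HMm).
- by move=> w /= h; apply: le_trans h; exact: stopped_pval_ge.
Qed.

End Validity.

Section MaximalInequality.
Context {d dT : measure_display} {Omega : measurableType d} {T : measurableType dT}
  {R : realType} (Q : probability Omega R).
Context {X : nat -> Omega -> T} {U : Omega -> R} {M : nat -> Omega -> R}.
Hypothesis HX : forall t, measurable_fun setT (X t).
Hypothesis HU : measurable_fun setT U.
Hypothesis HMw : forall s, measurable_wrt (filt U X s) (M s).
Hypothesis Hnonneg : forall t w, 0 <= M t w.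
Hypothesis Hmg : forall t A, filt U X t A ->
  (\int[Q]_(w in A) (M t.+1 w)%:E = \int[Q]_(w in A) (M t w)%:E)%E.

Let HMm s : measurable_fun setT (M s) := wrt_meas HX HU (HMw s).

Let mEM s (D : set Omega) : measurable_fun D (EFin \o M s).
Proof. by apply/measurable_EFinP; exact: measurable_funTS. Qed.

Lemma integral_M_setU s (B C : set Omega) : measurable B -> measurable C ->
  B `&` C = set0 ->
  (\int[Q]_(w in B `|` C) (M s w)%:E =
   \int[Q]_(w in B) (M s w)%:E + \int[Q]_(w in C) (M s w)%:E)%E.
Proof.
move=> mB mC BC; apply: ge0_integral_setU => //.
- exact: mEM.
- by move=> w _; rewrite lee_fin.
- by apply/disj_setPS; rewrite BC.
Qed.

Lemma integral_M_ge s (B : set Omega) (b : R) : measurable B -> 0 <= b ->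
  (forall w, B w -> b <= M s w) -> (b%:E * Q B <= \int[Q]_(w in B) (M s w)%:E)%E.
Proof.
by move=> mB b0 h; rewrite -integral_cst //; apply: ge0_le_integral => //; exact: mEM.
Qed.

Lemma integral_M_le s (B : set Omega) (b : R) : measurable B ->
  (forall w, B w -> M s w <= b) -> (\int[Q]_(w in B) (M s w)%:E <= b%:E * Q B)%E.
Proof.
move=> mB h; rewrite -integral_cst //; apply: ge0_le_integral => //; last exact: mEM.
by move=> w _; rewrite lee_fin.
Qed.

Context (A : set Omega) (t : nat) (b : R).
Hypothesis hA : filt U X t A.
Hypothesis b0 : 0 < b.

Let mA : measurable A := filt_meas HX HU hA.

(** The points of A where M exceeds b at some time in [t, t + k], split
    according to the first such time. *)
Fixpoint first_passage (k : nat) : set Omega :=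
  match k with
  | 0%N => A `&` [set w | b < M t w]
  | k.+1 => first_passage k `|`
            ((A `\` first_passage k) `&` [set w | b < M (t + k.+1) w])
  end.

Lemma first_passage_filt k : filt U X (t + k) (first_passage k).
Proof.
elim: k => [|k IH] /=; first by rewrite addn0; apply: filtI => //; exact: wrt_gt_set.
have hA' : filt U X (t + k.+1) A by apply: filt_mono hA; rewrite leq_addr.
have IH' : filt U X (t + k.+1) (first_passage k) by apply: filt_mono IH; rewrite leq_add2l.
by apply: filtU => //; apply: filtI; [exact: filtD|exact: wrt_gt_set].
Qed.

Let mH k : measurable (first_passage k) := filt_meas HX HU (first_passage_filt k).

Let mAD k : measurable (A `\` first_passage k) := measurableD mA (mH k).

Lemma first_passage_sub k : first_passage k `<=` A.
Proof. by elim: k => [|k IH] /= w; [case|case=> [/IH|[[]]]]. Qed.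

(** The invariant of the proof: the mass of M_t on A splits into at least b
    per unit of probability of the first passages, plus what remains. *)
Lemma first_passage_bound k : (b%:E * Q (first_passage k) +
    \int[Q]_(w in A `\` first_passage k) (M (t + k) w)%:E
  <= \int[Q]_(w in A) (M t w)%:E)%E.
Proof.
elim: k => [|k IH].
  rewrite addn0 -{2}(setDUK (first_passage_sub 0)) integral_M_setU //; last first.
    by apply/seteqP; split => // w [? []].
  by apply: leeD2r; apply: integral_M_ge => //; [exact: ltW|move=> w [_ /ltW]].
apply: le_trans IH.
set D := (A `\` first_passage k) `&` [set w | b < M (t + k.+1) w].
have mD : measurable D by apply: measurableI => //; exact: measurable_gt_set.
have DS : D `<=` A `\` first_passage k by move=> w [].
have ADk : A `\` (first_passage k `|` D) = (A `\` first_passage k) `\` D.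
  apply/seteqP; split => w /=; first by move=> [Aw /not_orP [nH nD]].
  by move=> [[Aw nH] nD]; split => // -[].
have step : (\int[Q]_(w in A `\` first_passage k) (M (t + k) w)%:E =
    \int[Q]_(w in A `\` first_passage k) (M (t + k.+1) w)%:E)%E.
  rewrite addnS Hmg //; apply: filtD; last exact: first_passage_filt.
  by apply: filt_mono hA; rewrite leq_addr.
rewrite /= -/D measureU //; last by apply/seteqP; split => // w [h [[_ ]]].
rewrite ge0_muleDr ?measure_ge0 // -addeA; apply: leeD2l.
rewrite step -{1}(setDUK DS) integral_M_setU //; last 2 first.
- exact: measurableD.
- by apply/seteqP; split => // w [? []].
rewrite ADk; apply: leeD2r; apply: integral_M_ge => //; first exact: ltW.
by move=> w [_ /ltW].
Qed.

Lemma maximal_inequality :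
  (b%:E * Q (A `&` [set w | exists2 s, (t <= s)%N & (b < M s w)%R])
  <= \int[Q]_(w in A) (M t w)%:E)%E.
Proof.
have bound k : (b%:E * Q (first_passage k) <= \int[Q]_(w in A) (M t w)%:E)%E.
  apply: le_trans (first_passage_bound k); apply: leeDl.
  by apply: integral_ge0 => w _; rewrite lee_fin.
have sub : A `&` [set w | exists2 s, (t <= s)%N & b < M s w] `<=`
    \bigcup_k first_passage k.
  move=> w [Aw [s ts bs]]; exists (s - t)%N => //.
  have sE : s = (t + (s - t))%N by rewrite subnKC.
  move: sE; case: (s - t)%N => [|j] sE /=; first by rewrite addn0 in sE; subst s.
  by have [h|h] := pselect (first_passage j w); [left|right; rewrite /= -sE].
have mU : measurable (\bigcup_k first_passage k) by exact: bigcupT_measurable.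
apply: (@le_trans _ _ (b%:E * Q (\bigcup_k first_passage k))%E).
  apply: lee_wpmul2l; first by rewrite lee_fin ltW.
  apply: le_measure; rewrite ?inE //; apply: measurableI => //.
  rewrite (_ : [set w | _] = \bigcup_(s in [set s | (t <= s)%N]) [set w | b < M s w]).
    by apply: bigcup_measurable => s _; exact: measurable_gt_set.
  by apply/seteqP; split => w /= [s ts h]; exists s.
have nd : {homo first_passage : n m / (n <= m)%N >-> (n <= m)%O}.
  by apply/nondecreasing_seqP => n; rewrite subsetEset => w /= h; left.
have cv := cvgeZl (y := b%:E) (ltac:(by [])) (nondecreasing_cvg_mu (mu := Q) mH mU nd).
rewrite -(cvg_lim _ cv) //; apply: lime_le; first by apply/cvg_ex; eexists; exact: cv.
by apply: nearW => k /=; exact: bound.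
Qed.

End MaximalInequality.

Section Admissibility.
Context {d dT : measure_display} {Omega : measurableType d} {T : measurableType dT}
  {R : realType} (Q : probability Omega R).
Context {X : nat -> Omega -> T} {U : Omega -> R} {M : nat -> Omega -> R}.
Hypothesis HX : forall t, measurable_fun setT (X t).
Hypothesis HU : measurable_fun setT U.
Hypothesis HMw : forall s, measurable_wrt (filt U X s) (M s).
Hypothesis Hnonneg : forall t w, 0 <= M t w.
Hypothesis HM0 : forall w, 0 < M 0%N w.
Hypothesis Hcont : continuous (cdf_inf_inv Q M).
Hypothesis Hmg : forall t A, filt U X t A ->
  (\int[Q]_(w in A) (M t.+1 w)%:E = \int[Q]_(w in A) (M t w)%:E)%E.

Local Notation Y := (total_inf M).
Local Notation F := (cdf_inf_inv Q M).
Local Notation p := (pval Q M).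

Let HMm s : measurable_fun setT (M s) := wrt_meas HX HU (HMw s).
Let Ym : measurable_fun setT Y := total_inf_measurable Hnonneg HM0 HMm.

(** The maximal-inequality step: an F_t0-event on which G_t0 > c + del and
    almost surely Y <= c is null, for M would have to rise from below
    1/(c + del) above 1/(c + del/2). *)
Lemma overshoot_null {A t0 c del} : filt U X t0 A -> 0 <= c -> 0 < del ->
  (forall w, A w -> c + del < running_inf M t0 w) ->
  Q (A `\` [set w | Y w <= c]) = 0%E -> Q A = 0%E.
Proof.
move=> hA c0 del0 AG null.
have mA := filt_meas HX HU hA.
have mYc : measurable [set w | Y w <= c] by exact: measurable_le_set.
pose b := (c + del / 2)^-1.
have b0 : 0 < b by rewrite invr_gt0; lra.
have QA : Q A = Q (A `&` [set w | Y w <= c]).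
  by rewrite (measureDI Q mA mYc) [X in (X + _)%E](_ : _ = 0%E) ?add0e.
have mhit : measurable [set w | exists2 s, (t0 <= s)%N & (b < M s w)%R].
  rewrite (_ : [set w | _] = \bigcup_(s in [set s | (t0 <= s)%N]) [set w | b < M s w]).
    by apply: bigcup_measurable => s _; exact: measurable_gt_set.
  by apply/seteqP; split => w /= [s ts h]; exists s.
have bound : (\int[Q]_(w in A) (M t0 w)%:E <= ((c + del)^-1)%:E * Q A)%E.
  apply: (integral_M_le Q HX HU HMw Hnonneg) => // w /AG.
  by apply: (M_le_of_running_inf Hnonneg HM0); lra.
have : (b%:E * Q A <= ((c + del)^-1)%:E * Q A)%E.
  rewrite {1}QA; apply: le_trans bound.
  apply: le_trans (maximal_inequality Q HX HU HMw Hnonneg Hmg _ _ _ hA b0).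
  apply: lee_wpmul2l; first by rewrite lee_fin ltW.
  apply: le_measure; rewrite ?inE //; try exact: measurableI.
  move=> w [Aw Yc]; split => //.
  exact: (exceeds_after Hnonneg HM0 del0 (AG w Aw) Yc).
(* Since b > 1/(c + del), the last inequality only holds for Q A = 0. *)
have QAf : Q A = (fine (Q A))%:E by rewrite fineK // fin_num_measure.
rewrite QAf -!EFinM lee_fin => ineq; congr EFin; apply/eqP; rewrite eq_le.
rewrite fine_ge0 ?measure_ge0 // andbT leNgt; apply/negP => QA0.
by move: ineq; rewrite ler_pM2r // /b lef_pV2 ?posrE; lra.
Qed.

Section Competitor.
Variable p' : nat -> Omega -> R.
Hypothesis p'valid : anytime_valid Q (filt U X) p'.
Hypothesis p'le : forall t, Q [set w | p' t w <= p t w] = 1%E.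

Let p'm t : measurable_fun setT (p' t) := wrt_meas HX HU (p'valid.1 t).

Let mle s : measurable [set w | p' s w <= p s w].
Proof.
rewrite (_ : [set w | _] = [set w | (p' s \- p s) w <= 0]).
  apply: measurable_le_set; apply: measurable_funB; first exact: p'm.
  exact: (pval_measurable Q HX HU HMw Hnonneg HM0 s).
by apply/seteqP; split => w /=; rewrite subr_le0.
Qed.

Lemma competitor_dominated : Q (~` \bigcap_s [set w | p' s w <= p s w]) = 0%E.
Proof.
rewrite setC_bigcap; apply/eqP; rewrite eq_le measure_ge0 andbT leNgt.
apply/negP => /(positive_bigcup _ (fun s => measurableC (mle s))) [s spos].
have : (0 < Q (~` [set w | (p' s w <= p s w)%R]))%E := spos.
by rewrite probability_setC // p'le subee // ltxx.
Qed.

Lemma competitor_liminf_le w : (forall s, p' s w <= p s w) ->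
  limn_inf (p' ^~ w) <= F (Y w).
Proof.
move=> le_p'p; apply: liminf_le_lim le_p'p; first by move=> t; exact: p'valid.2.1.
exact: pval_cvg.
Qed.

(** The validity step: stopping p' at t0 on A ⊆ {p'_t0 <= a} shows that
    almost all of A lies in {Y <= c}, where F c = a. *)
Lemma competitor_null {A t0 a c} : filt U X t0 A ->
  (forall w, A w -> p' t0 w <= a) -> 0 <= a <= 1 -> F c = a ->
  Q (A `\` [set w | Y w <= c]) = 0%E.
Proof.
move=> hA Ap' a01 Fc.
set Yc := [set w | Y w <= c].
have mA := filt_meas HX HU hA.
have mYc : measurable Yc by exact: measurable_le_set.
have st := stop_on_stopping_time hA.
set O := \bigcap_s [set w | p' s w <= p s w].
have mO : measurable O by exact: bigcapT_measurable.
have mS : measurable [set w | stopped p' (stop_on A t0) w <= a].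
  apply: stopped_le_measurable HX HU _ _ _ st p'm _.
  exact: liminf_measurable p'm p'valid.2.1.
have stopped_le : A `|` Yc `<=` [set w | stopped p' (stop_on A t0) w <= a] `|` ~` O.
  move=> w AYw; have [Ow|] := pselect (O w); last by right.
  left; rewrite /= /stopped /stop_on; case: pselect => [Aw|nAw]; first exact: Ap'.
  have p'oo : limn_inf (p' ^~ w) <= F (Y w).
    by apply: competitor_liminf_le => s; exact: Ow.
  case: AYw => // Yw; apply: le_trans p'oo _.
  by rewrite -Fc; apply: cdf_nondecreasing.
have AY : (Q (A `|` Yc) <= Q Yc)%E.
  rewrite cdfE // Fc; apply: le_trans (p'valid.2.2 _ st a a01).
  have mAY : measurable (A `|` Yc) by exact: measurableU.
  exact: (measure_le_up_to_null _ mAY mS (measurableC mO) competitor_dominated stopped_le).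
exact: (measure_diff_null _ mA mYc (fin_num_measure _ _ mYc) AY).
Qed.

End Competitor.

Lemma pval_admissible : admissible Q (filt U X) p.
Proof.
move=> [p' [p'valid [p'le [t0 improve]]]].
(* A level a with Q(p'_t0 <= a < p_t0) > 0, and the point c with F c = a. *)
have p'm := wrt_meas HX HU (p'valid.1 t0).
have p'ge0 w : 0 <= p' t0 w by case/andP: (p'valid.2.1 t0 w).
have ple1 w : p t0 w <= 1 by case/andP: (pval01 Q HX HU HMw Hnonneg HM0 t0 w).
have [a [a01 Bpos]] := level_with_positive_mass Q p'm
  (pval_measurable Q HX HU HMw Hnonneg HM0 t0) p'ge0 ple1 improve.
set B := [set w | p' t0 w <= a] `&` [set w | a < p t0 w] in Bpos.
have [c [Fc _ c0]] := cut_point Q Hnonneg HM0 HMm Hcont _ a01.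
have hB : filt U X t0 B.
  apply: filtI; first exact: wrt_le_set (p'valid.1 t0).
  exact: wrt_gt_set (pval_wrt Q HX HU HMw Hnonneg HM0 t0).
(* On B, p_t0 > a = F c forces G_t0 > c; B shrinks to an F_t0-event A of
   positive mass on which G_t0 > c + del. *)
have Bc w : B w -> c < running_inf M t0 w.
  move=> [_ /=]; rewrite pvalE => aF; rewrite ltNge; apply/negP.
  by move=> /(cdf_nondecreasing Q Hnonneg HM0 HMm); rewrite Fc leNgt aF.
have [del del0 Apos] := positive_margin Q (filt_meas HX HU hB)
  (wrt_meas HX HU (running_inf_wrt Hnonneg HM0 HMw t0)) Bpos Bc.
set A := B `&` _ in Apos.
have hA : filt U X t0 A.
  by apply: filtI => //; exact: wrt_gt_set (running_inf_wrt Hnonneg HM0 HMw t0).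
have A0 : Q A = 0%E.
  apply: (overshoot_null hA c0 del0 (fun w Aw => Aw.2)).
  apply: (competitor_null p' p'valid p'le hA (fun w Aw => Aw.1.1) _ Fc).
  by case/andP: a01 => -> /ltW ->.
have : (0 < Q A)%E := Apos.
by rewrite A0 ltxx.
Qed.

End Admissibility.

Theorem corollary1 (d dT : measure_display) (Omega : measurableType d)
  (T : measurableType dT) (R : realType) (Q : probability Omega R)
  (X : nat -> Omega -> T) (U : Omega -> R)
  (HX : forall t, measurable_fun setT (X t)) (HU : measurable_fun setT U)
  (HUunif : uniform01 Q U) (HUind : indep_U_X Q U X)
  (M : nat -> Omega -> R)
  (Hmart : martingale Q (filt U X) M)
  (Hnonneg : forall t w, 0 <= M t w)
  (HM0 : forall w, 0 < M 0%N w)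
  (Hcont : continuous (cdf_inf_inv Q M)) :
  anytime_valid Q (filt U X) (pval Q M) /\ admissible Q (filt U X) (pval Q M).
Proof.
have HMw s : measurable_wrt (filt U X s) (M s) := (Hmart s).1.
have Hmg t A : filt U X t A ->
    (\int[Q]_(w in A) (M t.+1 w)%:E = \int[Q]_(w in A) (M t w)%:E)%E.
  exact: (Hmart t).2.2.
split; first exact: pval_anytime_valid.
exact: pval_admissible HX HU HMw Hnonneg HM0 Hcont Hmg.
Qed.
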